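(* Let $Y$ be a finite connected simple undirected graph and $e=\{v,w\}$ a cycle-edge of $Y$. If $O^1,O^2\in\mathsf{Acyc}(Y)$ are $\kappa$-equivalent and $v\leq_{O^1}w$ and $v\leq_{O^2}w$, then $\mathcal{I}(O^1)=\mathcal{I}(O^2)$; that is, the same vertices lie on directed paths from $v$ to $w$ in $O^1$ and in $O^2$, and the induced subdigraphs of $O^1$ and $O^2$ on this vertex set coincide. Hence $\mathcal{I}^*([O]):=\mathcal{I}(O^1)$ for any $O^1\in[O]$ with $\mathcal{I}(O^1)\neq\varnothing$ is a well-defined map on $\mathsf{Acyc}(Y)/\!\sim_\kappa$.
   Context: A cycle-edge is an edge whose removal does not increase the number of connected components. $\mathsf{Acyc}(Y)$ is the set of acyclic orientations; an acyclic orientation $O$ induces a partial order $\leq_O$ on vertices with $i\leq_O j$ iff there is a directed path from $i$ to $j$. $\mathcal{I}(O)$ is the interval $[v,w]=\{a: v\leq_O a\leq_O w\}$ (with the induced orientation) if $v\leq_O w$, and the empty graph otherwise. A click at a source $x$ reverses all edges incident to $x$; two acyclic orientations are $\kappa$-equivalent if one can be transformed into the other by a finite sequence of clicks; $[O]$ is the $\kappa$-class of $O$. *)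

From mathcomp Require Import all_boot.
Set Implicit Arguments. Unset Strict Implicit. Unset Printing Implicit Defensive.

Section Defs.
Variable T : finType.

Definition simple_graph (e : rel T) : Prop := symmetric e /\ irreflexive e.
Definition connected_graph (e : rel T) : Prop := forall x y, connect e x y.

Definition remove_edge (e : rel T) (v w : T) : rel T :=
  [rel a b | e a b && ~~ (((a == v) && (b == w)) || ((a == w) && (b == v)))].

Definition cycle_edge (e : rel T) (v w : T) : Prop :=
  e v w /\ n_comp (remove_edge e v w) predT <= n_comp e predT.

Definition orientation (e : rel T) (O : rel T) : Prop :=
  forall a b, (O a b -> e a b) /\ (e a b -> O a b (+) O b a).

Definition acyclic_orientation (e : rel T) (O : rel T) : Prop :=
  orientation e O /\ forall a b, O a b -> ~~ connect O b a.

Definition leO (O : rel T) (i j : T) : bool := connect O i j.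

Definition source (O : rel T) (x : T) : bool := [forall y, ~~ O y x].

Definition click (O : rel T) (x : T) : rel T :=
  [rel a b | if (a == x) || (b == x) then O b a else O a b].

Definition click_step (O O' : rel T) : Prop :=
  exists2 x, source O x & O' =2 click O x.

Inductive click_reach : rel T -> rel T -> Prop :=
  | cr_refl O O' : O =2 O' -> click_reach O O'
  | cr_step O O' O'' : click_step O O' -> click_reach O' O'' -> click_reach O O''.

Definition kappa_equiv (O1 O2 : rel T) : Prop :=
  click_reach O1 O2 \/ click_reach O2 O1.

(* interval I(O) = [v,w]_O with induced orientation, empty if not v <=_O w *)
Definition interval_vertices (O : rel T) (v w : T) : {set T} :=
  if leO O v w then [set a | leO O v a && leO O a w] else set0.

Definition interval_rel (O : rel T) (v w : T) : rel T :=
  [rel a b | (a \in interval_vertices O v w) && (b \in interval_vertices O v w)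
             && O a b].

End Defs.

From mathcomp Require Import all_boot.
Set Implicit Arguments. Unset Strict Implicit. Unset Printing Implicit Defensive.

(* Along a closed walk in Y, the number of steps traversed in the direction
   of an orientation is invariant under clicks: clicking a source z turns
   each departure from z into a forward step and each arrival at z into a
   backward one, and on a closed walk departures and arrivals balance.
   Since v ~ w and v <=_O w, the edge is oriented v -> w in both O1 and O2.
   Closing a directed v-w path of O1 by the edge w - v gives a closed walk
   whose only backward step is w -> v, in O1 and hence in O2, so the path
   is directed in O2 as well. Every vertex and every arc of the interval
   lies on such a path, and the situation is symmetric in O1 and O2. *)

Section ForwardArcs.
Variable T : finType.

Fixpoint forward_arcs (O : rel T) (x : T) (s : seq T) : nat :=
  if s is y :: s' then O x y + forward_arcs O y s' else 0.

Fixpoint departures (z x : T) (s : seq T) : nat :=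
  if s is y :: s' then (x == z) + departures z y s' else 0.

Lemma eq_forward_arcs (O O' : rel T) x s :
  O =2 O' -> forward_arcs O x s = forward_arcs O' x s.
Proof. by move=> eqO; elim: s x => //= y s IH x; rewrite eqO IH. Qed.

Lemma departures_closed z x s :
  last x s = x -> departures z x s = count_mem z s.
Proof.
have balance : departures z x s + (last x s == z) = (x == z) + count_mem z s.
  by elim: s x => [|y s IH] x /=; rewrite ?addn0 // -addnA IH.
by move=> lx; apply/eqP; rewrite -(eqn_add2l (x == z)) -{1}lx addnC balance.
Qed.

Lemma forward_arcs_le_size (O : rel T) x s : forward_arcs O x s <= size s.
Proof. by elim: s x => //= y s IH x; rewrite -add1n leq_add ?leq_b1. Qed.

Lemma forward_arcs_eq_size (O : rel T) x s :
  (forward_arcs O x s == size s) = path O x s.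
Proof.
elim: s x => //= y s IH x; case: (O x y); first by rewrite add1n eqSS IH.
by rewrite add0n /= ltn_eqF // ltnS forward_arcs_le_size.
Qed.

Lemma mem_interval_vertices (O : rel T) v w a :
  leO O v w -> (a \in interval_vertices O v w) = leO O v a && leO O a w.
Proof. by move=> le; rewrite /interval_vertices le inE. Qed.

Lemma interval_transfer (O O' : rel T) v w :
  leO O v w -> leO O' v w ->
  (forall s, path O v s -> last v s = w -> path O' v s) ->
  interval_vertices O v w \subset interval_vertices O' v w /\
  (forall a b, interval_rel O v w a b -> O' a b).
Proof.
move=> le le' transfer; split.
  apply/subsetP=> a; rewrite !mem_interval_vertices //.
  case/andP=> /connectP [p Pp ->] /connectP [q Pq lq].
  have /andP [P'p P'q] : path O' v p && path O' (last v p) q.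
    by rewrite -cat_path transfer ?cat_path ?Pp ?last_cat -?lq.
  by apply/andP; split; apply/connectP; [exists p | exists q].
move=> a b /andP [/andP []]; rewrite !mem_interval_vertices //.
case/andP=> /connectP [p Pp ->] _ /andP [_ /connectP [q Pq lq]] Oab.
have : path O' v (p ++ b :: q).
  by rewrite transfer ?cat_path ?Pp /= ?Oab ?Pq ?last_cat -?lq.
by rewrite cat_path => /and3P [].
Qed.

Variable e : rel T.
Hypotheses (e_sym : symmetric e) (e_irr : irreflexive e).

Lemma orientation_click (O : rel T) z :
  orientation e O -> orientation e (click O z).
Proof.
move=> orO a b; rewrite /click /=; split.
  by case: ifP => _ Oab; [rewrite e_sym|]; apply: (orO _ _).1.
by move=> eab; rewrite orbC; case: ifP => _; [rewrite addbC|]; apply: (orO _ _).2.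
Qed.

Lemma click_arc_balance (O : rel T) z x y :
  orientation e O -> source O z -> e x y ->
  click O z x y + (x == z) = O x y + (y == z).
Proof.
move=> orO /forallP srcz exy; rewrite /click /=.
have [xz|xNz] := eqVneq x z.
  subst z; have yNx : (y == x) = false by apply: contraTF exy => /eqP ->; rewrite e_irr.
  by rewrite yNx /=; move: ((orO x y).2 exy) (srcz y); case: (O y x); case: (O x y).
have [yz|yNz] := eqVneq y z; last by rewrite !addn0.
by rewrite yz in exy *; move: ((orO x z).2 exy) (srcz x); case: (O x z); case: (O z x).
Qed.

Lemma click_forward_arcs (O : rel T) z x s :
  orientation e O -> source O z -> path e x s ->
  forward_arcs (click O z) x s + departures z x s =
  forward_arcs O x s + count_mem z s.
Proof.
move=> orO srcz; elim: s x => //= y s IH x /andP [exy es].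
by rewrite addnACA click_arc_balance // IH // addnACA.
Qed.

Definition closed_walk_invariant (O O' : rel T) : Prop :=
  forall x s, path e x s -> last x s = x -> forward_arcs O' x s = forward_arcs O x s.

Lemma click_reach_invariant (O O' : rel T) :
  click_reach O O' -> orientation e O ->
  orientation e O' /\ closed_walk_invariant O O'.
Proof.
elim=> {O O'} [O O' eqO | O O' O'' [z srcz eqO'] _ IH] orO.
  split=> [a b | x s _ _]; first by rewrite -!eqO.
  by rewrite (eq_forward_arcs _ _ eqO).
have orO' : orientation e O' by move=> a b; rewrite !eqO'; exact: orientation_click.
have [orO'' invO'] := IH orO'; split=> // x s es lx.
rewrite invO'// (eq_forward_arcs _ _ eqO').
apply/eqP; rewrite -(eqn_add2r (count_mem z s)) -{1}(departures_closed z lx).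
by rewrite click_forward_arcs.
Qed.

Lemma kappa_equiv_invariant (O1 O2 : rel T) :
  orientation e O1 -> orientation e O2 -> kappa_equiv O1 O2 ->
  closed_walk_invariant O1 O2.
Proof.
move=> or1 or2 [R | R] x s es lx; first by rewrite (click_reach_invariant R or1).2.
by rewrite (click_reach_invariant R or2).2.
Qed.

Lemma arc_of_leO (O : rel T) v w :
  acyclic_orientation e O -> e v w -> leO O v w -> O v w.
Proof.
move=> [orO acO] evw le; move: ((orO v w).2 evw).
by case: (O v w) => //= /acO; rewrite -/(leO O v w) le.
Qed.

Lemma path_invariant (O O' : rel T) v w s :
  orientation e O -> orientation e O' -> O v w -> O' v w ->
  closed_walk_invariant O O' -> path O v s -> last v s = w -> path O' v s.
Proof.
move=> orO orO' Ovw O'vw inv Ps ls.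
have evw : e v w := (orO v w).1 Ovw.
have not_wv (Q : rel T) : orientation e Q -> Q v w -> Q w v = false.
  by move=> orQ Qvw; move: ((orQ v w).2 evw); rewrite Qvw; case: (Q w v).
have ews : path e w (v :: s).
  by rewrite /= e_sym evw (sub_path _ Ps) // => a b /(orO a b).1.
move: (inv _ _ ews ls) => /=; rewrite !not_wv // !add0n => eq_fwd.
by rewrite -forward_arcs_eq_size eq_fwd forward_arcs_eq_size.
Qed.

Lemma interval_sub_of_kappa_equiv (O O' : rel T) v w :
  acyclic_orientation e O -> acyclic_orientation e O' -> kappa_equiv O O' ->
  e v w -> leO O v w -> leO O' v w ->
  interval_vertices O v w \subset interval_vertices O' v w /\
  (forall a b, interval_rel O v w a b -> O' a b).
Proof.
move=> acO acO' kOO' evw le le'; apply: interval_transfer => // s.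
apply: path_invariant acO.1 acO'.1 (arc_of_leO acO evw le) (arc_of_leO acO' evw le') _.
exact: kappa_equiv_invariant acO.1 acO'.1 kOO'.
Qed.

End ForwardArcs.

Theorem proposition5 (T : finType) (e : rel T) (v w : T) (O1 O2 : rel T) :
  simple_graph e -> connected_graph e -> cycle_edge e v w ->
  acyclic_orientation e O1 -> acyclic_orientation e O2 ->
  kappa_equiv O1 O2 ->
  leO O1 v w -> leO O2 v w ->
  interval_vertices O1 v w = interval_vertices O2 v w /\
  interval_rel O1 v w =2 interval_rel O2 v w.
Proof.
move=> [e_sym e_irr] _ [evw _] ac1 ac2 k12 le1 le2.
have k21 : kappa_equiv O2 O1 by case: k12; [right | left].
have [sub12 arc12] := interval_sub_of_kappa_equiv e_sym e_irr ac1 ac2 k12 evw le1 le2.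
have [sub21 arc21] := interval_sub_of_kappa_equiv e_sym e_irr ac2 ac1 k21 evw le2 le1.
have eqV : interval_vertices O1 v w = interval_vertices O2 v w.
  by apply/eqP; rewrite eqEsubset sub12 sub21.
split=> // a b; apply/idP/idP=> Iab.
  by rewrite /interval_rel /= -eqV arc12 // andbT; case/andP: Iab => ->.
by rewrite /interval_rel /= eqV arc21 // andbT; case/andP: Iab => ->.
Qed.
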